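(* Let $\dot x = f(x,u) = g(x)+h(x)u$ and assume there exists a Lyapunov function $V$ such that under the policy $\mu(x)$ the state is asymptotically stable, i.e. $\dot V(x)<0$ for all $x\in\mathcal{B} = \{x\in\mathbb{R}^n : \Vert x\Vert < r\}$, $r>0$. Consider the trajectory $x(t)$ starting at $x(0)$ that applies $\mu(x(t))$ except on $[\tau,\tau+\lambda]$, where it applies $\mu_\star(t) = -R^{-1}h(x(t))^\top\rho(t) + \mu(x(t))$, and let $t\ge\tau+\lambda$. Then $$V(x(t)) - V(x(t),\mu(x(t))) \le \lambda\beta,$$ where $V(x(t),\mu(x(t))) := V(x(0)) + \int_0^t \frac{\partial V}{\partial x}(x(s))\, f(x(s),\mu(x(s)))\,ds$ and $$\beta = \sup_{t\in[\tau,\tau+\lambda]} -\frac{\partial V}{\partial x}(x(t))\,h(x(t))R^{-1}h(x(t))^\top\rho(t).$$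
   Context: $x\in\mathbb{R}^n$, $u\in\mathbb{R}^m$, $g:\mathbb{R}^n\to\mathbb{R}^n$, $h:\mathbb{R}^n\to\mathbb{R}^{n\times m}$, $\mu:\mathbb{R}^n\to\mathbb{R}^m$ an equilibrium policy, $R\in\mathbb{R}^{m\times m}$ positive definite, $\tau$ a switching time and $\lambda\ge 0$ a switching duration. $\rho$ is the adjoint solving $\dot\rho = -\left(\frac{\partial \ell}{\partial x} + \frac{\partial \mu}{\partial x}^\top\frac{\partial \ell}{\partial u} - \frac{\eta}{T_r}\sum_{i=1}^N \frac{p(s_i)}{q(s_i)}\left(\frac{\partial \gamma_i}{\partial x} + \frac{\partial \mu}{\partial x}^\top \frac{\partial \gamma_i}{\partial u}\right)\right) - \left(\frac{\partial f}{\partial x} + \frac{\partial f}{\partial u}\frac{\partial \mu}{\partial x}\right)^\top \rho$ with $\rho(t_i+T)=\frac{\partial m}{\partial x}(x(t_i+T))$ along the nominal trajectory under $\mu$ on a horizon $[t_i,t_i+T]$, where $\ell$ is a running cost, $m$ a terminal cost, $s_1,\dots,s_N$ uniform samples from a search domain $\mathcal{X}^v\subset\mathbb{R}^{n+m}$, $p$ a target density, $q(s)=\frac{\eta}{T_r}\int_{t_i-t_r}^{t_i+T}\exp[-\tfrac12(s-x_v(t))^\top\Sigma^{-1}(s-x_v(t))]dt$ with $x_v$ the part of the state–action pair in $\mathcal{X}^v$, $\Sigma$ positive definite, $\eta$ normalizing, $T_r=T+t_r$, and $\gamma_i=\exp[-\tfrac12(s_i-x_v)^\top\Sigma^{-1}(s_i-x_v)]$.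 *)

From HB Require Import structures.
From mathcomp Require Import all_boot all_order all_algebra.
From mathcomp Require Import all_classical all_reals all_analysis.
Set Implicit Arguments. Unset Strict Implicit. Unset Printing Implicit Defensive.
Import Order.TTheory GRing.Theory Num.Theory.
Import numFieldNormedType.Exports.
Local Open Scope classical_set_scope.
Local Open Scope ring_scope.

Definition enorm (R : realType) (n : nat) (x : 'cV[R]_n) : R :=
  Num.sqrt (\sum_(i < n) x i ord0 ^+ 2).

Definition posdef (R : realType) (m : nat) (A : 'M[R]_m) : Prop :=
  A^T = A /\ forall v : 'cV[R]_m, v != 0 -> 0 < (v^T *m A *m v) ord0 ord0.

Definition dyn (R : realType) (n m : nat) (g : 'cV[R]_n -> 'cV[R]_n)
  (h : 'cV[R]_n -> 'M[R]_(n, m)) (x : 'cV[R]_n) (u : 'cV[R]_m) : 'cV[R]_n :=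
  g x + h x *m u.

Definition mu_star (R : realType) (n m : nat) (h : 'cV[R]_n -> 'M[R]_(n, m))
  (Rm : 'M[R]_m) (mu : 'cV[R]_n -> 'cV[R]_m) (rho : R -> 'cV[R]_n)
  (x : 'cV[R]_n) (t : R) : 'cV[R]_m :=
  - (invmx Rm *m (h x)^T *m rho t) + mu x.

Definition switched_control (R : realType) (n m : nat) (h : 'cV[R]_n -> 'M[R]_(n, m))
  (Rm : 'M[R]_m) (mu : 'cV[R]_n -> 'cV[R]_m) (rho : R -> 'cV[R]_n)
  (tau lam : R) (x : R -> 'cV[R]_n) (t : R) : 'cV[R]_m :=
  if (tau <= t) && (t <= tau + lam) then mu_star h Rm mu rho (x t) t else mu (x t).

Definition V_nominal (R : realType) (n m : nat) (V : 'cV[R]_n -> R)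
  (dV : 'cV[R]_n -> 'rV[R]_n) (g : 'cV[R]_n -> 'cV[R]_n)
  (h : 'cV[R]_n -> 'M[R]_(n, m)) (mu : 'cV[R]_n -> 'cV[R]_m)
  (x : R -> 'cV[R]_n) (t : R) : R :=
  V (x 0) + Rintegral lebesgue_measure `[0, t]
     (fun s => (dV (x s) *m dyn g h (x s) (mu (x s))) ord0 ord0).

Definition beta (R : realType) (n m : nat) (dV : 'cV[R]_n -> 'rV[R]_n)
  (h : 'cV[R]_n -> 'M[R]_(n, m)) (Rm : 'M[R]_m) (rho : R -> 'cV[R]_n)
  (x : R -> 'cV[R]_n) (tau lam : R) : R :=
  sup [set - (dV (x s) *m h (x s) *m invmx Rm *m (h (x s))^T *m rho s) ord0 ord0
       | s in `[tau, tau + lam]].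

From HB Require Import structures.
From mathcomp Require Import all_boot all_order all_algebra.
From mathcomp Require Import all_classical all_reals all_analysis.
From mathcomp Require Import lra.
Import Order.TTheory GRing.Theory Num.Theory.
Import numFieldNormedType.Exports.
Local Open Scope classical_set_scope.
Local Open Scope ring_scope.

(* Away from the switching instants V o x is differentiable, with derivative
   dV(x) f(x, mu(x)) plus, on [tau, tau + lam], the extra term
   - dV(x) h(x) R^-1 h(x)^T rho contributed by mu_star.  Integrating over
   [0, tau], [tau, tau + lam] and [tau + lam, t] with the fundamental theorem of
   calculus, V(x t) - V(x t, mu(x t)) is exactly the integral of that extra term
   over [tau, tau + lam], which is at most lam times its supremum beta. *)

Section matrix_limits.
Context {R : realType} {T : Type} (F : set_system T) {FF : Filter F}.

Lemma cvg_mx_entries a b (A : T -> 'M[R]_(a, b)) (A0 : 'M[R]_(a, b)) :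
  (forall i j, (fun y => A y i j) @ F --> A0 i j) -> A @ F --> A0.
Proof.
move=> cvgA; apply/cvg_mx_entourageP => E entE.
apply: filter_forall => i; apply: filter_forall => j.
have /cvg_entourageP /(_ E entE) EA := cvgA i j.
by apply: (@filterS _ F _ _ _ _ EA) => y /= ?; rewrite inE.
Qed.

Lemma cvg_mx_entry a b (A : T -> 'M[R]_(a, b)) (A0 : 'M[R]_(a, b)) i j :
  A @ F --> A0 -> (fun y => A y i j) @ F --> A0 i j.
Proof.
by move=> cvgA; exact: cvg_comp _ _ cvgA (@coord_continuous _ _ _ i j A0).
Qed.

Lemma cvg_mulmx a b c (A : T -> 'M[R]_(a, b)) (B : T -> 'M[R]_(b, c))
    (A0 : 'M[R]_(a, b)) (B0 : 'M[R]_(b, c)) :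
  A @ F --> A0 -> B @ F --> B0 -> (fun y => A y *m B y) @ F --> A0 *m B0.
Proof.
move=> cvgA cvgB; apply: cvg_mx_entries => i j.
rewrite mxE; under eq_cvg do rewrite mxE.
apply: cvg_big => [|k _]; first exact: add_continuous.
by apply: cvgM; apply: cvg_mx_entry.
Qed.

Lemma cvg_trmx a b (A : T -> 'M[R]_(a, b)) (A0 : 'M[R]_(a, b)) :
  A @ F --> A0 -> (fun y => (A y)^T) @ F --> A0^T.
Proof.
move=> cvgA; apply: cvg_mx_entries => i j.
by rewrite mxE; under eq_cvg do rewrite mxE; apply: cvg_mx_entry.
Qed.

End matrix_limits.

Lemma continuous_trmx {R : realType} a b : continuous (@trmx R a b).
Proof. by move=> A; exact: (@cvg_trmx R _ (nbhs A) _ a b id A cvg_id). Qed.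

Lemma is_derive_comp {R : realType} {V W : normedModType R}
    {f : R -> V} {k : V -> W} {s : R} {df : V} :
  differentiable k (f s) -> is_derive s 1 f df ->
  is_derive s 1 (k \o f) ('D_df k (f s)).
Proof.
move=> dk [df1 <-]; have dfs : differentiable f s by apply/derivable1_diffP.
have dkf : differentiable (k \o f) s by apply: differentiable_comp.
apply: DeriveDef; first by apply/derivable1_diffP.
by rewrite deriveE // diff_comp //= -!deriveE.
Qed.

Section interval_integrals.
Context {R : realType}.
Notation leb := (@lebesgue_measure R).

Lemma Rintegral_continuous_FTC2 (f F : R -> R) a b : a <= b ->
  {within `[a, b], continuous f} -> {within `[a, b], continuous F} ->
  {in `]a, b[, forall s : R, is_derive s 1 F (f s)} ->
  Rintegral leb `[a, b] f = F b - F a.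
Proof.
rewrite le_eqVlt => /predU1P[<- _ _ _|ab cf cF dF].
  by rewrite set_itv1 Rintegral_set1 subrr.
have [_ Fa Fb] := (continuous_within_itvP F ab).1 cF.
rewrite /Rintegral (@continuous_FTC2 _ f F a b ab cf) //.
  by split => // s /dF [].
by move=> s /dF Fs; rewrite derive1E derive_val.
Qed.

Lemma Rintegral_itv_split (f : R -> R) a c b : a <= c -> c <= b ->
  leb.-integrable `[a, b] (EFin \o f) ->
  Rintegral leb `[a, b] f = Rintegral leb `[a, c] f + Rintegral leb `[c, b] f.
Proof.
move=> ac cb intf.
have := @Rintegral_itvB R f (BLeft a) (BRight b) c intf.
rewrite !bnd_simp => /(_ ac cb) itvB.
rewrite -(@Rintegral_itv_obnd_cbnd R c (BRight b)); last first.
  by apply: integrableS intf => //; apply: subset_itvr; rewrite bnd_simp.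
by rewrite -itvB addrC subrK.
Qed.

Lemma Rintegral_le_length_sup (f : R -> R) a b : a <= b ->
  {within `[a, b], continuous f} ->
  Rintegral leb `[a, b] f <= (b - a) * sup (f @` `[a, b]).
Proof.
move=> ab cf.
have [c _ fc_max] := EVT_max ab cf.
have f_le_sup s : [set` `[a, b]] s -> f s <= sup (f @` `[a, b]).
  move=> abs; apply: ub_le_sup; last by exists s.
  by exists (f c) => _ [u abu <-]; apply: fc_max.
have cst_int : leb.-integrable `[a, b] (EFin \o cst (sup (f @` `[a, b]))).
  apply: continuous_compact_integrable; first exact: segment_compact.
  by apply: continuous_subspaceT; apply: cst_continuous.
have f_int : leb.-integrable `[a, b] (EFin \o f).
  by apply: continuous_compact_integrable => //; apply: segment_compact.
apply: le_trans (le_Rintegral _ f_int cst_int f_le_sup) _ => //.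
rewrite Rintegral_cst // mulrC.
suff -> : fine (leb `[a, b]) = b - a by [].
rewrite (@lebesgue_measure_itv R `[a, b]) /= lte_fin.
by case: ltP => //= ba; lra.
Qed.

End interval_integrals.

Lemma continuous_subspace_itv_ge0 {R : realType} {U : topologicalType}
    (f : R -> U) (a b : R) : 0 <= a ->
  {within [set u | 0 <= u], continuous f} -> {within `[a, b], continuous f}.
Proof.
move=> a_ge0; apply: continuous_subspaceW => u /=.
by rewrite in_itv /= => /andP[a_u _]; apply: le_trans a_u.
Qed.

Section switched_trajectory.
Context {R : realType} {n m : nat}.
Variables (g : 'cV[R]_n -> 'cV[R]_n) (h : 'cV[R]_n -> 'M[R]_(n, m)).
Variables (mu : 'cV[R]_n -> 'cV[R]_m) (Rm : 'M[R]_m) (rho : R -> 'cV[R]_n).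
Variables (V : 'cV[R]_n -> R) (dV : 'cV[R]_n -> 'rV[R]_n).
Variables (x : R -> 'cV[R]_n) (tau lam : R).
Notation leb := (@lebesgue_measure R).

Hypotheses (cg : continuous g) (ch : continuous h) (cmu : continuous mu).
Hypotheses (crho : continuous rho) (cdV : continuous dV).
Hypothesis dVdiff : forall z, differentiable V z.
Hypothesis dV_gradient : forall z v, 'D_v V z = (dV z *m v) ord0 ord0.
Hypotheses (tau_ge0 : 0 <= tau) (lam_ge0 : 0 <= lam).
Hypothesis cx : {within [set s | 0 <= s], continuous x}.
Hypothesis dx : forall s, 0 < s -> s != tau -> s != tau + lam ->
  is_derive s 1 x (dyn g h (x s) (switched_control h Rm mu rho tau lam x s)).

Definition nominal_rate s := (dV (x s) *m dyn g h (x s) (mu (x s))) ord0 ord0.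

Definition switching_rate s :=
  - (dV (x s) *m h (x s) *m invmx Rm *m (h (x s))^T *m rho s) ord0 ord0.

Lemma dyn_mu_star z s : dyn g h z (mu_star h Rm mu rho z s) =
  dyn g h z (mu z) - h z *m invmx Rm *m (h z)^T *m rho s.
Proof. by rewrite /dyn /mu_star mulmxDr mulmxN !mulmxA [- _ + _]addrC addrA. Qed.

Lemma is_derive_Vx s : 0 < s -> s != tau -> s != tau + lam ->
  is_derive s 1 (V \o x) (nominal_rate s +
    (if (tau <= s) && (s <= tau + lam) then switching_rate s else 0)).
Proof.
move=> s_gt0 s_tau s_taulam.
have := is_derive_comp (dVdiff (x s)) (dx _ s_gt0 s_tau s_taulam).
rewrite dV_gradient /switched_control; case: ifP => _; last by rewrite addr0.
rewrite dyn_mu_star mulmxBr !mulmxA [X in is_derive _ _ _ X -> _]mxE.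
by rewrite [X in is_derive _ _ _ (_ + X) -> _]mxE.
Qed.

Let cvg_within_comp_x (W : topologicalType) (k : 'cV[R]_n -> W) (s : R) :
  0 <= s -> continuous k ->
  (k \o x) @ within [set u | 0 <= u] (nbhs s) --> k (x s).
Proof.
move: cx => /subspace_continuousP cxs s_ge0 ck.
exact: cvg_comp (cxs s s_ge0) (ck (x s)).
Qed.

Lemma continuous_nominal_rate :
  {within [set s | 0 <= s], continuous nominal_rate}.
Proof.
apply/subspace_continuousP => s s_ge0; apply: cvg_mx_entry.
apply: cvg_mulmx; first exact: cvg_within_comp_x.
apply: cvgD; first exact: cvg_within_comp_x.
by apply: cvg_mulmx; apply: cvg_within_comp_x.
Qed.

Lemma continuous_switching_rate :
  {within [set s | 0 <= s], continuous switching_rate}.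
Proof.
apply/subspace_continuousP => s s_ge0; apply: cvgN; apply: cvg_mx_entry.
apply: cvg_mulmx; last exact: cvg_within_filter (crho s).
apply: cvg_mulmx.
  apply: cvg_mulmx; last exact: cvg_cst.
  by apply: cvg_mulmx; apply: cvg_within_comp_x.
apply: (@cvg_within_comp_x _ (fun z => (h z)^T)) => // z.
by apply: continuous_comp; [exact: ch | exact: continuous_trmx].
Qed.

Lemma is_derive_Vx_nominal s : 0 < s -> ~~ ((tau <= s) && (s <= tau + lam)) ->
  is_derive s 1 (V \o x) (nominal_rate s).
Proof.
move=> s_gt0 s_out.
have [s_tau s_taulam] : s != tau /\ s != tau + lam.
  by split; apply: contraNneq s_out => ->; rewrite lexx lerDl lam_ge0.
by have := is_derive_Vx _ s_gt0 s_tau s_taulam; rewrite (negbTE s_out) addr0.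
Qed.

Lemma is_derive_Vx_switched s : tau < s < tau + lam ->
  is_derive s 1 (V \o x) (nominal_rate s + switching_rate s).
Proof.
case/andP => tau_s s_taulam.
have := is_derive_Vx _ (le_lt_trans tau_ge0 tau_s)
  (negbT (gt_eqF tau_s)) (negbT (lt_eqF s_taulam)).
by rewrite (ltW tau_s) (ltW s_taulam).
Qed.

Let continuous_Vx : {within [set u | 0 <= u], continuous (V \o x)}.
Proof.
apply: within_continuous_comp cx => z _.
exact: differentiable_continuous (dVdiff z).
Qed.

Lemma Vx_sub_V_nominal t : tau + lam <= t ->
  V (x t) - V_nominal V dV g h mu x t =
  Rintegral leb `[tau, tau + lam] switching_rate.
Proof.
move=> taulam_t.
have taulam_ge0 : 0 <= tau + lam by rewrite addr_ge0.
have tau_taulam : tau <= tau + lam by rewrite lerDl.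
have integrable_itv (f : R -> R) (a b : R) :
    0 <= a -> {within [set u | 0 <= u], continuous f} ->
    leb.-integrable `[a, b] (EFin \o f).
  move=> a_ge0 cf; apply: continuous_compact_integrable.
    exact: segment_compact.
  exact: continuous_subspace_itv_ge0.
have before :
    Rintegral leb `[0, tau] nominal_rate = V (x tau) - V (x 0).
  apply: (@Rintegral_continuous_FTC2 _ _ (V \o x)) => //.
  - by apply: continuous_subspace_itv_ge0; last exact: continuous_nominal_rate.
  - by apply: continuous_subspace_itv_ge0; last exact: continuous_Vx.
  move=> s; rewrite in_itv /= => /andP[s_gt0 s_tau].
  by apply: is_derive_Vx_nominal; rewrite // (leNgt tau) s_tau.
have during : Rintegral leb `[tau, tau + lam] nominal_rate +
    Rintegral leb `[tau, tau + lam] switching_rate =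
    V (x (tau + lam)) - V (x tau).
  rewrite -RintegralD //; first last.
  - exact: integrable_itv continuous_switching_rate.
  - exact: integrable_itv continuous_nominal_rate.
  apply: (@Rintegral_continuous_FTC2 _ _ (V \o x)) => //.
  - apply: continuous_subspace_itv_ge0 => //; apply: within_continuousD.
      exact: continuous_nominal_rate.
    exact: continuous_switching_rate.
  - by apply: continuous_subspace_itv_ge0; last exact: continuous_Vx.
  by move=> s; rewrite in_itv /=; apply: is_derive_Vx_switched.
have after : Rintegral leb `[tau + lam, t] nominal_rate =
    V (x t) - V (x (tau + lam)).
  apply: (@Rintegral_continuous_FTC2 _ _ (V \o x)) => //.
  - by apply: continuous_subspace_itv_ge0; last exact: continuous_nominal_rate.
  - by apply: continuous_subspace_itv_ge0; last exact: continuous_Vx.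
  move=> s; rewrite in_itv /= => /andP[taulam_s s_t].
  apply: is_derive_Vx_nominal; first exact: le_lt_trans taulam_s.
  by rewrite negb_and -!ltNge taulam_s orbT.
rewrite /V_nominal -/nominal_rate.
rewrite (@Rintegral_itv_split _ _ 0 tau t) //; last 2 first.
- exact: le_trans taulam_t.
- exact: integrable_itv continuous_nominal_rate.
rewrite (@Rintegral_itv_split _ _ tau (tau + lam) t) //; last first.
  exact: integrable_itv continuous_nominal_rate.
rewrite before after; lra.
Qed.

End switched_trajectory.

Theorem theorem1 (R : realType) (n m : nat)
  (g : 'cV[R]_n -> 'cV[R]_n) (h : 'cV[R]_n -> 'M[R]_(n, m))
  (mu : 'cV[R]_n -> 'cV[R]_m) (Rm : 'M[R]_m)
  (V : 'cV[R]_n -> R) (dV : 'cV[R]_n -> 'rV[R]_n) (r : R)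
  (rho : R -> 'cV[R]_n) (x : R -> 'cV[R]_n) (tau lam t : R) :
  (* standing regularity *)
  continuous g -> continuous h -> continuous mu -> continuous rho ->
  posdef Rm ->
  (* V is a C^1 Lyapunov function with gradient dV *)
  (forall z : 'cV[R]_n, differentiable V z) ->
  (forall z v : 'cV[R]_n, 'D_v V z = (dV z *m v) ord0 ord0) ->
  continuous dV ->
  V 0 = 0 -> (forall z : 'cV[R]_n, z != 0 -> 0 < V z) ->
  0 < r ->
  (forall z : 'cV[R]_n, z != 0 -> enorm z < r ->
     (dV z *m dyn g h z (mu z)) ord0 ord0 < 0) ->
  (* switching time and duration *)
  0 <= tau -> 0 <= lam ->
  (* x is the trajectory from x(0) applying mu except on [tau, tau+lam] *)
  {within [set s | 0 <= s], continuous x} ->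
  (forall s, 0 < s -> s != tau -> s != tau + lam ->
     is_derive s 1 x (dyn g h (x s) (switched_control h Rm mu rho tau lam x s))) ->
  tau + lam <= t ->
  V (x t) - V_nominal V dV g h mu x t <= lam * beta dV h Rm rho x tau lam.
Proof.
move=> cg ch cmu crho _ dVdiff dV_gradient cdV _ _ _ _ tau_ge0 lam_ge0 cx dx.
move=> taulam_t.
rewrite Vx_sub_V_nominal //.
have tau_taulam : tau <= tau + lam by rewrite lerDl.
apply: le_trans (Rintegral_le_length_sup _ _ _ tau_taulam _) _.
  by apply: continuous_subspace_itv_ge0; last exact: continuous_switching_rate.
by rewrite addrC addKr.
Qed.
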